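(* Let $X$ be a graph, $F$ a graph, and $\phi$ an $\mathrm{Aut}(F)$-voltage assignment on $X$. Let $\Gamma$ act on $X$ and $\Delta$ act on $F$ by graph automorphisms without inversions, such that the pair $(\Gamma, \Delta)$ is $\phi$-compatible. Then the product action $$(\gamma, \delta)(x, i) = (\gamma x, \delta i), \qquad (\gamma,\delta) \in \Gamma \times \Delta, \ (x,i) \in V(X \times^{\phi} F),$$ is an action by graph automorphisms on $X \times^{\phi} F$. Furthermore, if the actions of $\Gamma$ on $X$ and of $\Delta$ on $F$ are of finite co-volume, so is the action of $\Gamma \times \Delta$ on $X \times^{\phi} F$.
   Context: For a graph $G$, $E(\overrightarrow{G})$ is the set of ordered edges (each edge with both orientations); an $\mathrm{Aut}(F)$-voltage assignment on $G$ is a map $\phi: E(\overrightarrow{G}) \to \mathrm{Aut}(F)$ with $\phi(uv) = \phi(vu)^{-1}$. The graph bundle $X \times^{\phi} F$ has vertex set $V(X)\times V(F)$, with $(u,i) \sim (v,j)$ iff either $u \sim v$ and $j = i^{\phi(uv)}$ (the image of $i$ under $\phi(uv)$), or $u = v$ and $i \sim j$ in $F$. The action of $\Gamma$ on $X$ is $(F,\phi)$-compatible if $\phi(\gamma(u)\gamma(v)) = \phi(uv)$ for all edges $uv$ and all $\gamma \in \Gamma$. The action of $\Delta$ on $F$ (regarded as a subgroup of $\mathrm{Aut}(F)$) is $(X,\phi)$-compatible if the image of $\phi$ is contained in the centralizer $C_{\mathrm{Aut}(F)}(\Delta)$. The pair $(\Gamma,\Delta)$ is $\phi$-compatible if both hold.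 An action of a group $G$ on a graph is of finite co-volume if every vertex stabilizer $G_v$ is finite and $\sum_{v \in \mathcal{F}_0} 1/|G_v| < \infty$, where $\mathcal{F}_0$ is a set of representatives of the vertex orbits. *)

From Stdlib Require Import Reals List.
Open Scope R_scope.

Definition simple_graph {V : Type} (adj : V -> V -> Prop) : Prop :=
  (forall x y, adj x y -> adj y x) /\ (forall x, ~ adj x x).

Definition is_group {G : Type} (mul : G -> G -> G) (e : G) (inv : G -> G) : Prop :=
  (forall a b c, mul a (mul b c) = mul (mul a b) c) /\
  (forall a, mul e a = a) /\ (forall a, mul a e = a) /\
  (forall a, mul (inv a) a = e) /\ (forall a, mul a (inv a) = e).

Definition is_graph_aut {V : Type} (adj : V -> V -> Prop) (f : V -> V) : Prop :=
  (exists g : V -> V, (forall x, g (f x) = x) /\ (forall x, f (g x) = x)) /\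
  (forall x y, adj x y <-> adj (f x) (f y)).

Definition action_by_auts {G V : Type} (adj : V -> V -> Prop)
  (mul : G -> G -> G) (e : G) (act : G -> V -> V) : Prop :=
  (forall x, act e x = x) /\
  (forall g h x, act (mul g h) x = act g (act h x)) /\
  (forall g, is_graph_aut adj (act g)).

Definition without_inversions {G V : Type} (adj : V -> V -> Prop)
  (act : G -> V -> V) : Prop :=
  forall g u v, adj u v -> ~ (act g u = v /\ act g v = u).

(* Aut(F)-voltage assignment: phi u v is the element of Aut(F) attached to the
   ordered edge uv (its values on non-edges are irrelevant), and
   phi v u = (phi u v)^-1.  The image of i under phi(uv) is  phi u v i. *)
Definition voltage_assignment {VX VF : Type} (adjX : VX -> VX -> Prop)
  (adjF : VF -> VF -> Prop) (phi : VX -> VX -> VF -> VF) : Prop :=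
  forall u v, adjX u v ->
    is_graph_aut adjF (phi u v) /\
    (forall i, phi v u (phi u v i) = i) /\ (forall i, phi u v (phi v u i) = i).

Definition bundle_adj {VX VF : Type} (adjX : VX -> VX -> Prop)
  (adjF : VF -> VF -> Prop) (phi : VX -> VX -> VF -> VF)
  (p q : VX * VF) : Prop :=
  (adjX (fst p) (fst q) /\ snd q = phi (fst p) (fst q) (snd p)) \/
  (fst p = fst q /\ adjF (snd p) (snd q)).

Definition F_phi_compatible {G VX VF : Type} (adjX : VX -> VX -> Prop)
  (phi : VX -> VX -> VF -> VF) (act : G -> VX -> VX) : Prop :=
  forall g u v, adjX u v -> forall i, phi (act g u) (act g v) i = phi u v i.

Definition X_phi_compatible {D VX VF : Type} (adjX : VX -> VX -> Prop)
  (phi : VX -> VX -> VF -> VF) (act : D -> VF -> VF) : Prop :=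
  forall u v, adjX u v -> forall d i, phi u v (act d i) = act d (phi u v i).

Definition stab_card {G V : Type} (act : G -> V -> V) (v : V) (n : nat) : Prop :=
  exists l : list G, NoDup l /\ (forall g, In g l <-> act g v = v) /\ length l = n.

Definition orbit_reps {G V : Type} (act : G -> V -> V) (reps : V -> Prop) : Prop :=
  (forall x, exists r g, reps r /\ act g r = x) /\
  (forall r1 r2 g, reps r1 -> reps r2 -> act g r1 = r2 -> r1 = r2).

Fixpoint inv_card_sum {V : Type} (l : list (V * nat)) : R :=
  match l with
  | nil => 0
  | p :: l' => / INR (snd p) + inv_card_sum l'
  end.

(* Finite co-volume: all vertex stabilizers are finite and, for a set F0 of
   orbit representatives, the (nonnegative) sum over F0 of 1/|G_v| converges,
   i.e. all its finite partial sums are bounded. *)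
Definition finite_covolume {G V : Type} (act : G -> V -> V) : Prop :=
  (forall v, exists n, stab_card act v n) /\
  exists reps : V -> Prop, orbit_reps act reps /\
  exists M : R, forall l : list (V * nat),
    NoDup (map fst l) ->
    (forall p, In p l -> reps (fst p) /\ stab_card act (fst p) (snd p)) ->
    inv_card_sum l <= M.

Definition prod_mul {G D : Type} (mulG : G -> G -> G) (mulD : D -> D -> D)
  (a b : G * D) : G * D := (mulG (fst a) (fst b), mulD (snd a) (snd b)).

Definition prod_act {G D VX VF : Type} (actG : G -> VX -> VX)
  (actD : D -> VF -> VF) (gd : G * D) (p : VX * VF) : VX * VF :=
  (actG (fst gd) (fst p), actD (snd gd) (snd p)).

(* The product action is by automorphisms of the bundle: on a fibre edge both
   coordinates move independently, and on an edge (u,i) ~ (v, phi(uv) i) the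
   compatibility conditions give phi(gu gv)(d i) = phi(uv)(d i) = d (phi(uv) i).
   The stabilizer of (x,i) is G_x x D_i, and the pairs of orbit representatives
   form a set of orbit representatives, so any finite partial sum of
   1/|G_x||D_i| is bounded by the product of the two bounds for the factors. *)

From Stdlib Require Import Reals List ClassicalEpsilon Lra.

Lemma graph_aut_inj {V : Type} (adj : V -> V -> Prop) (f : V -> V) :
  is_graph_aut adj f -> forall x y, f x = f y -> x = y.
Proof.
  intros [[f' [Hf'f _]] _] x y Hxy.
  now rewrite <- (Hf'f x), <- (Hf'f y), Hxy.
Qed.

Section ProductAction.

Variables (VX VF G D : Type) (adjX : VX -> VX -> Prop) (adjF : VF -> VF -> Prop).
Variable phi : VX -> VX -> VF -> VF.
Variables (actG : G -> VX -> VX) (actD : D -> VF -> VF).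

Hypothesis autG : forall g, is_graph_aut adjX (actG g).
Hypothesis autD : forall d, is_graph_aut adjF (actD d).
Hypothesis compatG : F_phi_compatible adjX phi actG.
Hypothesis compatD : X_phi_compatible adjX phi actD.

Lemma bundle_adj_prod_act (gd : G * D) (p q : VX * VF) :
  bundle_adj adjX adjF phi p q <->
  bundle_adj adjX adjF phi (prod_act actG actD gd p) (prod_act actG actD gd q).
Proof.
  destruct gd as [g d], p as [u i], q as [v j].
  unfold bundle_adj, prod_act; simpl.
  pose proof (autG g) as [_ adjG]; pose proof (autD d) as [_ adjD].
  split.
  - intros [[Huv ->] | [-> Hij]].
    + left. split; [exact (proj1 (adjG u v) Huv)|].
      now rewrite compatG, compatD.
    + right. split; [reflexivity | exact (proj1 (adjD i j) Hij)].
  - intros [[Huv Hj] | [Huv Hij]].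
    + pose proof (proj2 (adjG u v) Huv) as Huv'.
      left. split; [exact Huv'|].
      rewrite compatG, compatD in Hj by exact Huv'.
      exact (graph_aut_inj _ _ (autD d) _ _ Hj).
    + right. split.
      * exact (graph_aut_inj _ _ (autG g) _ _ Huv).
      * exact (proj2 (adjD i j) Hij).
Qed.

Lemma prod_act_graph_aut (gd : G * D) :
  is_graph_aut (bundle_adj adjX adjF phi) (prod_act actG actD gd).
Proof.
  split; [|exact (bundle_adj_prod_act gd)].
  destruct gd as [g d].
  destruct (autG g) as [[g' [Hg'g Hgg']] _], (autD d) as [[d' [Hd'd Hdd']] _].
  exists (fun p => (g' (fst p), d' (snd p))).
  unfold prod_act; split; intros [x i]; simpl; congruence.
Qed.

End ProductAction.

Lemma prod_act_action_by_auts (VX VF G D : Type)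
  (adjX : VX -> VX -> Prop) (adjF : VF -> VF -> Prop) (phi : VX -> VX -> VF -> VF)
  (mulG : G -> G -> G) (eG : G) (mulD : D -> D -> D) (eD : D)
  (actG : G -> VX -> VX) (actD : D -> VF -> VF) :
  action_by_auts adjX mulG eG actG -> action_by_auts adjF mulD eD actD ->
  F_phi_compatible adjX phi actG -> X_phi_compatible adjX phi actD ->
  action_by_auts (bundle_adj adjX adjF phi) (prod_mul mulG mulD) (eG, eD)
    (prod_act actG actD).
Proof.
  intros [HeG [HmG autG]] [HeD [HmD autD]] compatG compatD.
  unfold prod_act, prod_mul.
  split; [|split].
  - intros [x i]; simpl; now rewrite HeG, HeD.
  - intros [g d] [g' d'] [x i]; simpl; now rewrite HmG, HmD.
  - now apply prod_act_graph_aut.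
Qed.

Fixpoint sumR {A : Type} (f : A -> R) (l : list A) : R :=
  match l with
  | nil => 0
  | x :: l' => f x + sumR f l'
  end.

Section ListSums.

Variable A : Type.

Lemma sumR_app (f : A -> R) (l1 l2 : list A) :
  sumR f (l1 ++ l2) = sumR f l1 + sumR f l2.
Proof. induction l1 as [|x l1 IH]; simpl; [lra | rewrite IH; lra]. Qed.

Lemma sumR_map {B : Type} (f : B -> R) (k : A -> B) (l : list A) :
  sumR f (map k l) = sumR (fun x => f (k x)) l.
Proof. induction l as [|x l IH]; simpl; [reflexivity | now rewrite IH]. Qed.

Lemma sumR_ext_in (f g : A -> R) (l : list A) :
  (forall x, In x l -> f x = g x) -> sumR f l = sumR g l.
Proof.
  induction l as [|x l IH]; intros Hfg; simpl; [reflexivity|].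
  f_equal; [apply Hfg, in_eq|].
  apply IH. intros y Hy. apply Hfg, in_cons, Hy.
Qed.

Lemma sumR_mult_l (c : R) (f : A -> R) (l : list A) :
  sumR (fun x => c * f x) l = c * sumR f l.
Proof. induction l as [|x l IH]; simpl; [lra | rewrite IH; lra]. Qed.

Variable f : A -> R.
Hypothesis f_ge0 : forall x, 0 <= f x.

Lemma sumR_ge0 (l : list A) : 0 <= sumR f l.
Proof. induction l as [|x l IH]; simpl; [lra | specialize (f_ge0 x); lra]. Qed.

Lemma sumR_incl_le (l l' : list A) :
  NoDup l -> incl l l' -> sumR f l <= sumR f l'.
Proof.
  intros Hl; revert l'.
  induction Hl as [|a l Ha Hl IH]; intros l' Hincl; simpl; [apply sumR_ge0|].
  destruct (in_split a l' (Hincl a (in_eq a l))) as [l1 [l2 ->]].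
  rewrite !sumR_app; simpl.
  enough (sumR f l <= sumR f (l1 ++ l2)) by (rewrite sumR_app in *; lra).
  apply IH. intros y Hy.
  destruct (in_elt_inv y a l1 l2 (Hincl y (in_cons a y l Hy))) as [-> | Hy'];
    [contradiction | exact Hy'].
Qed.

End ListSums.

Lemma NoDup_list_prod {A B : Type} (la : list A) (lb : list B) :
  NoDup la -> NoDup lb -> NoDup (list_prod la lb).
Proof.
  intros Ha Hb; induction Ha as [|x la Hx Ha IH]; simpl; [constructor|].
  apply NoDup_app; [| exact IH |].
  - apply NoDup_map_NoDup_ForallPairs; [|exact Hb].
    intros y z _ _ H; now injection H.
  - intros p Hp Hp'. apply in_map_iff in Hp as [y [<- _]].
    apply in_prod_iff in Hp'. tauto.
Qed.

Lemma sumR_list_prod {A B : Type} (f : A -> R) (g : B -> R) la lb :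
  sumR (fun p => f (fst p) * g (snd p)) (list_prod la lb) = sumR f la * sumR g lb.
Proof.
  induction la as [|x la IH]; simpl; [lra|].
  rewrite sumR_app, IH, sumR_map; simpl. rewrite sumR_mult_l. lra.
Qed.

Lemma sumR_pairs_le {A B : Type} (f : A -> R) (g : B -> R)
  (l : list (A * B)) (la : list A) (lb : list B) :
  (forall x, 0 <= f x) -> (forall y, 0 <= g y) ->
  NoDup l -> NoDup la -> NoDup lb ->
  (forall p, In p l -> In (fst p) la /\ In (snd p) lb) ->
  sumR (fun p => f (fst p) * g (snd p)) l <= sumR f la * sumR g lb.
Proof.
  intros f_ge0 g_ge0 Hl Hla Hlb Hcover.
  rewrite <- sumR_list_prod.
  apply sumR_incl_le; [| exact Hl |].
  - intros [x y]; simpl; now apply Rmult_le_pos.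
  - intros [x y] Hp. apply in_prod_iff. exact (Hcover _ Hp).
Qed.

Lemma inv_card_sum_sumR {V : Type} (l : list (V * nat)) :
  inv_card_sum l = sumR (fun p => / INR (snd p)) l.
Proof. induction l as [|p l IH]; simpl; [reflexivity | now rewrite IH]. Qed.

Lemma inv_INR_ge0 (n : nat) : 0 <= / INR n.
Proof.
  destruct n as [|n]; [simpl; rewrite Rinv_0; lra|].
  apply Rlt_le, Rinv_0_lt_compat, lt_0_INR, Nat.lt_0_succ.
Qed.

Section Covolume.

Context {G V : Type} (act : G -> V -> V).

Lemma stab_card_unique (v : V) (n m : nat) :
  stab_card act v n -> stab_card act v m -> n = m.
Proof.
  intros [l1 [N1 [M1 <-]]] [l2 [N2 [M2 <-]]].
  apply Nat.le_antisymm; apply NoDup_incl_length; auto; intros g Hg.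
  - now apply M2, M1.
  - now apply M1, M2.
Qed.

Lemma inv_stab_sum_le (reps : V -> Prop) (M : R) (c : V -> nat) (L : list V) :
  (forall v, stab_card act v (c v)) ->
  (forall l : list (V * nat), NoDup (map fst l) ->
     (forall p, In p l -> reps (fst p) /\ stab_card act (fst p) (snd p)) ->
     inv_card_sum l <= M) ->
  NoDup L -> (forall v, In v L -> reps v) ->
  sumR (fun v => / INR (c v)) L <= M.
Proof.
  intros Hc HM HL Hreps.
  specialize (HM (map (fun v => (v, c v)) L)).
  rewrite inv_card_sum_sumR, sumR_map, map_map, map_id in HM.
  apply HM; [exact HL|].
  intros p Hp. apply in_map_iff in Hp as [v [<- Hv]]. simpl. auto.
Qed.

End Covolume.

Lemma stab_card_prod {G D VX VF : Type} (actG : G -> VX -> VX) (actD : D -> VF -> VF)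
  (x : VX) (i : VF) (n m : nat) :
  stab_card actG x n -> stab_card actD i m ->
  stab_card (prod_act actG actD) (x, i) (n * m).
Proof.
  intros [lx [Nx [Mx <-]]] [li [Ni [Mi <-]]].
  exists (list_prod lx li). split; [now apply NoDup_list_prod|]. split.
  - intros [g d]. rewrite in_prod_iff, Mx, Mi. unfold prod_act; simpl. split.
    + now intros [-> ->].
    + intros H; now injection H.
  - apply length_prod.
Qed.

Lemma orbit_reps_prod {G D VX VF : Type} (actG : G -> VX -> VX) (actD : D -> VF -> VF)
  (repsX : VX -> Prop) (repsF : VF -> Prop) :
  orbit_reps actG repsX -> orbit_reps actD repsF ->
  orbit_reps (prod_act actG actD) (fun p => repsX (fst p) /\ repsF (snd p)).
Proof.
  intros [coverX uniqX] [coverF uniqF]. unfold prod_act. split.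
  - intros [x i].
    destruct (coverX x) as [r [g [Hr <-]]], (coverF i) as [s [d [Hs <-]]].
    now exists (r, s), (g, d).
  - intros [r1 s1] [r2 s2] [g d] [Hr1 Hs1] [Hr2 Hs2] H; simpl in *.
    injection H as Hr Hs. f_equal; eauto.
Qed.

Lemma finite_covolume_prod {G D VX VF : Type}
  (actG : G -> VX -> VX) (actD : D -> VF -> VF) :
  finite_covolume actG -> finite_covolume actD ->
  finite_covolume (prod_act actG actD).
Proof.
  intros [stabG [repsX [HrepsX [MX HMX]]]] [stabD [repsF [HrepsF [MF HMF]]]].
  destruct (choice _ stabG) as [cX HcX], (choice _ stabD) as [cF HcF].
  split; [intros [x i]; eexists; now apply stab_card_prod|].
  exists (fun p => repsX (fst p) /\ repsF (snd p)).
  split; [now apply orbit_reps_prod|].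
  exists (MX * MF). intros l Hnd Hl.
  set (fX := fun x => / INR (cX x)); set (fF := fun i => / INR (cF i)).
  assert (Hsum : inv_card_sum l = sumR (fun p => fX (fst p) * fF (snd p)) (map fst l)).
  { rewrite inv_card_sum_sumR, sumR_map. apply sumR_ext_in.
    intros [[x i] n] Hp. destruct (Hl _ Hp) as [_ Hn]; simpl in Hn |- *.
    rewrite (stab_card_unique _ _ _ _ Hn (stab_card_prod _ _ _ _ _ _ (HcX x) (HcF i))).
    unfold fX, fF. now rewrite mult_INR, Rinv_mult. }
  pose (decX := fun x y : VX => excluded_middle_informative (x = y)).
  pose (decF := fun x y : VF => excluded_middle_informative (x = y)).
  set (LX := nodup decX (map fst (map fst l))).
  set (LF := nodup decF (map snd (map fst l))).
  assert (Hreps : forall p, In p (map fst l) -> repsX (fst p) /\ repsF (snd p)).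
  { intros p Hp. apply in_map_iff in Hp as [q [<- Hq]]. exact (proj1 (Hl q Hq)). }
  assert (fX_ge0 : forall x, 0 <= fX x) by (intro; apply inv_INR_ge0).
  assert (fF_ge0 : forall i, 0 <= fF i) by (intro; apply inv_INR_ge0).
  rewrite Hsum.
  apply Rle_trans with (sumR fX LX * sumR fF LF).
  - unfold LX, LF. apply sumR_pairs_le; auto using NoDup_nodup.
    intros p Hp. rewrite !nodup_In. auto using in_map.
  - apply Rmult_le_compat; auto using sumR_ge0.
    + apply (inv_stab_sum_le actG repsX MX); unfold LX; auto using NoDup_nodup.
      intros x Hx. rewrite nodup_In in Hx.
      apply in_map_iff in Hx as [p [<- Hp]]. now apply Hreps.
    + apply (inv_stab_sum_le actD repsF MF); unfold LF; auto using NoDup_nodup.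
      intros i Hi. rewrite nodup_In in Hi.
      apply in_map_iff in Hi as [p [<- Hp]]. now apply Hreps.
Qed.

Theorem lemma3p2
  (VX VF G D : Type)
  (adjX : VX -> VX -> Prop) (adjF : VF -> VF -> Prop)
  (phi : VX -> VX -> VF -> VF)
  (mulG : G -> G -> G) (eG : G) (invG : G -> G)
  (mulD : D -> D -> D) (eD : D) (invD : D -> D)
  (actG : G -> VX -> VX) (actD : D -> VF -> VF) :
  simple_graph adjX -> simple_graph adjF ->
  voltage_assignment adjX adjF phi ->
  is_group mulG eG invG -> is_group mulD eD invD ->
  action_by_auts adjX mulG eG actG -> without_inversions adjX actG ->
  action_by_auts adjF mulD eD actD -> without_inversions adjF actD ->
  F_phi_compatible adjX phi actG ->
  X_phi_compatible adjX phi actD ->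
  action_by_auts (bundle_adj adjX adjF phi) (prod_mul mulG mulD) (eG, eD)
    (prod_act actG actD) /\
  (finite_covolume actG -> finite_covolume actD ->
   finite_covolume (prod_act actG actD)).
Proof.
  intros _ _ _ _ _ actionG _ actionD _ compatG compatD.
  split.
  - now apply prod_act_action_by_auts.
  - apply finite_covolume_prod.
Qed.
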